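(* Fix any seed set $S\subseteq V$ and any two edge-probability vectors $\tilde p,p^*\in[0,1]^{|E|}$, with corresponding $\tilde\theta,\theta^*$ defined by $\theta(e)=-\ln(1-p(e))$. Let $(S_0=S,S_1,\dots,S_{n-1})$ be a random IC cascade generated under $p^*$, and let $(X_{j,u},Y_{j,u})_{1\le j\le J_u}$ be the data pairs of node $u$ obtained from it by the economical construction. Then $$|\sigma(S,\tilde p)-\sigma(S,p^* )|\;\le\;\sum_{v\in V\setminus S}\ \sum_{u\in V[S,v]}\mathbb{E}\Bigl[\sum_{j=1}^{J_u}\bigl|X_{j,u}^\top(\tilde\theta_u-\theta^*_u)\bigr|\Bigr],$$ where the expectation is over the cascade.
   Context: $G=(V,E)$ is a directed graph with $n=|V|$; each edge $e$ has probability $p(e)\in[0,1]$. For $v\in V$, $N(v)$ is the set of in-neighbours, $d_v=|N(v)|$, $E_v$ the incoming edges, and for $E'\subseteq E_v$, $\chi(E')\in\{0,1\}^{d_v}$ is its indicator vector; $\theta_u=(\theta(e))_{e\in E_u}$. IC model with seed set $S_0$: $S_{-1}=\emptyset$; for $\tau\ge1$, $S_\tau$ is $S_{\tau-1}$ together with each $v\notin S_{\tau-1}$ activated, where each $u\in N(v)\cap(S_{\tau-1}\setminus S_{\tau-2})$ independently activates $v$ with probability $p(e_{uv})$. $\sigma(S,p)=\mathbb{E}[|S_{n-1}|]$ when $S_0=S$ under edge probabilities $p$. Relevance: given $S$ and $v\in V\setminus S$, a node $u\in V\setminus S$ is relevant to $v$ if some directed path from a node of $S$ to $v$ contains $u$;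 $V[S,v]$ is the set of such nodes. Economical data-pair construction: for $u\notin S_0$, scan $\tau=0,1,\dots$; whenever $u\notin S_\tau$ and $A_\tau:=(S_\tau\setminus S_{\tau-1})\cap N(u)\neq\emptyset$, record $(\chi(\{e_{wu}:w\in A_\tau\}),\mathbf 1\{u\in S_{\tau+1}\})$; stop after $u$ becomes active. These are $(X_{j,u},Y_{j,u})$, $1\le j\le J_u$ (with $J_u=0$ if no pair arises). *)

From HB Require Import structures.
From mathcomp Require Import all_boot all_order all_algebra.
From mathcomp Require Import boolp reals exp.
Set Implicit Arguments. Unset Strict Implicit. Unset Printing Implicit Defensive.
Import Order.TTheory GRing.Theory Num.Theory.
Local Open Scope ring_scope.

Section IC.
Variables (R : realType) (V : finType) (E : rel V).
(* E u v : there is a directed edge e_{uv} from u to v. *)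

Definition edgeset : {set V * V} := [set e | E e.1 e.2].

Definition theta (p : V -> V -> R) (u v : V) : R := - ln (1 - p u v).

(* An outcome of the independent edge trials: the set of edges whose
   (single) activation attempt succeeds. *)
Definition cfg_weight (p : V -> V -> R) (w : {set V * V}) : R :=
  \prod_(e in edgeset) (if e \in w then p e.1 e.2 else 1 - p e.1 e.2).

Definition expect (p : V -> V -> R) (f : {set V * V} -> R) : R :=
  \sum_(w : {set V * V} | w \subset edgeset) cfg_weight p w * f w.

Definition ic_step (w : {set V * V}) (prev cur : {set V}) : {set V} :=
  cur :|: [set v | (v \notin cur) &&
             [exists u, [&& u \in cur :\: prev, E u v & (u, v) \in w]]].

(* cascade_pair w S0 t = (S_{t-1}, S_t), with S_{-1} = set0 *)
Fixpoint cascade_pair (w : {set V * V}) (S0 : {set V}) (t : nat)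
  : {set V} * {set V} :=
  match t with
  | 0 => (set0, S0)
  | t'.+1 => let pr := cascade_pair w S0 t' in (pr.2, ic_step w pr.1 pr.2)
  end.

Definition cascade (w : {set V * V}) (S0 : {set V}) (t : nat) : {set V} := (cascade_pair w S0 t).2.
Definition newly (w : {set V * V}) (S0 : {set V}) (t : nat) : {set V} :=
  (cascade_pair w S0 t).2 :\: (cascade_pair w S0 t).1.

Definition sigma (p : V -> V -> R) (S : {set V}) : R :=
  expect p (fun w => (#|cascade w S #|V|.-1|)%:R).

Definition Aset (w : {set V * V}) (S0 : {set V}) (u : V) (t : nat) : {set V} := newly w S0 t :&: [set x | E x u].

(* Economical data pairs of node u: (A_t, 1{u in S_{t+1}}) for the scanned
   t = 0 .. n-2 with u ∉ S_t and A_t nonempty; the first component is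
   encoded by its set of in-neighbours, i.e. chi({e_{wu} : w in A_t}). *)
Definition data_pairs (w : {set V * V}) (S0 : {set V}) (u : V) : seq ({set V} * bool) :=
  if u \in S0 then [::] else
  [seq (Aset w S0 u t, u \in cascade w S0 t.+1)
     | t <- iota 0 #|V|.-1 & (u \notin cascade w S0 t) && (Aset w S0 u t != set0)].

(* indicator vector entry of edge e_{xu} *)
Definition chi (A : {set V}) (x : V) : R := (x \in A)%:R.

Definition xdot (A : {set V}) (th : V -> V -> R) (u : V) : R :=
  \sum_(x | E x u) chi A x * th x u.

Definition relevant (S : {set V}) (v u : V) : Prop :=
  u \notin S /\
  exists (s : V) (q : seq V),
    [/\ s \in S, path E s q, uniq (s :: q), last s q = v & u \in s :: q].

Definition relset (S : {set V}) (v : V) : {set V} :=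
  [set u | `[< relevant S v u >]].

End IC.

From HB Require Import structures.
From mathcomp Require Import all_boot all_order all_algebra.
From mathcomp Require Import boolp reals sequences exp.
From mathcomp Require Import ring lra.
Set Implicit Arguments. Unset Strict Implicit. Unset Printing Implicit Defensive.
Import Order.TTheory GRing.Theory Num.Theory.
Local Open Scope ring_scope.

(* sigma(S, p) is the sum over v of the probability that v is eventually
   active; fix v.  A hybrid argument over the steps of the cascade: given the
   state (S_{t-1}, S_t), the next state depends only on the trials of the edges
   leaving S_t \ S_{t-1}, through the set of nodes they hit, and these trials
   are never read again.  So the difference splits into the effect of changing
   the law of the current step (continuation under p~) plus the expected
   difference of the continuations (under p* ).  A node u is hit at the current
   step unless all its trials fail, an event of probability exp (- X^T theta_u)
   with X the indicator of its newly active in-neighbours; since e^{-x} is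
   1-Lipschitz on [0, oo), changing theta moves it by at most
   |X^T (theta~_u - theta*_u)|.  Hitting u cannot change whether v is reached
   unless u is relevant to v: a path from u to v avoiding the active nodes would
   extend a seed path to a simple path through u.  Summed over the steps, the
   cost paid at u is exactly the sum over its data pairs. *)

Lemma setU1_ind (T : finType) (P : {set T} -> Prop) : P set0 ->
  (forall x (D : {set T}), x \notin D -> P D -> P (x |: D)) -> forall D, P D.
Proof.
move=> P0 PS D; have [n] := ubnP #|D|; elim: n D => // n IH D.
case: (set_0Vmem D) => [-> //|[x xD]] cD.
rewrite -(setD1K xD); apply: PS; first by rewrite !inE eqxx.
by apply: IH; move: cD; rewrite (cardsD1 x) xD add1n ltnS.
Qed.

Section BernoulliProduct.
Variables (R : numDomainType) (T : finType).
Implicit Types (q : T -> R) (D B : {set T}) (h : {set T} -> R).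

Definition bweight q D B : R := \prod_(x in D) (if x \in B then q x else 1 - q x).
Definition bexpect q D h : R := \sum_(B : {set T} | B \subset D) bweight q D B * h B.

Lemma sum_subsets_setU1 (F : {set T} -> R) x D : x \notin D ->
  \sum_(B : {set T} | B \subset x |: D) F B =
  \sum_(B : {set T} | B \subset D) F B + \sum_(B : {set T} | B \subset D) F (x |: B).
Proof.
move=> xD; rewrite (bigID (fun B => x \in B)) /= addrC; congr (_ + _).
  apply: eq_bigl => B; apply/idP/idP.
    case/andP=> sB xB; apply/subsetP=> y yB; move: (subsetP sB y yB).
    by rewrite !inE; case/orP=> // /eqP yx; rewrite -yx yB in xB.
  move=> sB; rewrite (subset_trans sB (subsetU1 _ _)) /=.
  by apply/negP=> xB; rewrite (subsetP sB _ xB) in xD.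
rewrite (reindex_onto (fun B => x |: B) (fun B => B :\ x)) /=; last first.
  by move=> B /andP[_ xB]; rewrite setD1K.
apply: eq_bigl => B; apply/idP/idP.
  case/andP=> /andP[sB _] /eqP eB.
  have xB : x \notin B by rewrite -eB !inE eqxx.
  apply/subsetP=> y yB; move: (subsetP sB y); rewrite !inE yB orbT => /(_ isT).
  by case/orP=> // /eqP yx; rewrite -yx yB in xB.
move=> sB; have xB : x \notin B by apply/negP=> xB; rewrite (subsetP sB _ xB) in xD.
by rewrite setUS //= setU11 setU1K // eqxx.
Qed.

Lemma bexpect_set0 q h : bexpect q set0 h = h set0.
Proof.
rewrite /bexpect (big_pred1 set0); last by move=> B; rewrite /= subset0.
by rewrite /bweight big_set0 mul1r.
Qed.

Lemma bexpect_setU1 q h x D : x \notin D ->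
  bexpect q (x |: D) h =
  q x * bexpect q D (fun B => h (x |: B)) + (1 - q x) * bexpect q D h.
Proof.
move=> xD; rewrite /bexpect sum_subsets_setU1 // addrC !mulr_sumr.
have inD y : y \in D -> (y == x) = false by apply: contraTF => /eqP ->.
congr (_ + _); apply: eq_bigr => B sB; rewrite /bweight big_setU1 //= mulrA.
  rewrite setU11; congr (_ * _ * _); apply: eq_bigr => y yD.
  by rewrite !inE inD.
by rewrite (contraNF (subsetP sB x) xD).
Qed.

Lemma eq_bexpect q D h1 h2 : (forall B, B \subset D -> h1 B = h2 B) ->
  bexpect q D h1 = bexpect q D h2.
Proof. by move=> eqh; apply: eq_bigr => B sB; rewrite eqh. Qed.

Lemma bexpect_cst q D c : bexpect q D (fun _ => c) = c.
Proof.
elim/setU1_ind: D => [|x D xD IH]; first by rewrite bexpect_set0.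
by rewrite bexpect_setU1 // !IH; ring.
Qed.

Lemma bexpectD q D h1 h2 :
  bexpect q D (fun B => h1 B + h2 B) = bexpect q D h1 + bexpect q D h2.
Proof. by rewrite /bexpect -big_split; apply: eq_bigr => B _; rewrite mulrDr. Qed.

Lemma bexpectB q D h1 h2 :
  bexpect q D (fun B => h1 B - h2 B) = bexpect q D h1 - bexpect q D h2.
Proof. by rewrite /bexpect -sumrB; apply: eq_bigr => B _; rewrite mulrBr. Qed.

Lemma bexpect_sum (I : Type) (r : seq I) (P : pred I) q D (F : I -> {set T} -> R) :
  bexpect q D (fun B => \sum_(i <- r | P i) F i B) = \sum_(i <- r | P i) bexpect q D (F i).
Proof.
rewrite /bexpect -exchange_big; apply: eq_bigr => B _.
by rewrite mulr_sumr.
Qed.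

Lemma bexpect_setU q D1 D2 h : {in D1, forall x, x \notin D2} ->
  bexpect q (D1 :|: D2) h =
  bexpect q D1 (fun B1 => bexpect q D2 (fun B2 => h (B1 :|: B2))).
Proof.
elim/setU1_ind: D1 h => [|x D1 xD1 IH] h dis.
  by rewrite set0U bexpect_set0; apply: eq_bexpect => B _; rewrite set0U.
have xD2 : x \notin D2 by apply: dis; rewrite setU11.
have {}dis : {in D1, forall y, y \notin D2}.
  by move=> y yD; apply: dis; rewrite !inE yD orbT.
rewrite -setUA bexpect_setU1; last by rewrite !inE negb_or xD1 xD2.
rewrite !IH // bexpect_setU1 //; congr (_ * _ + _).
by apply: eq_bexpect => B _; apply: eq_bexpect => B2 _; rewrite setUA.
Qed.

(* Conditioning on the trace [B1] of the random set on [D1]; [Phi B1] must not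
   depend on the part of its argument inside [D1]. *)
Lemma bexpect_tower q D D1 h (Phi : {set T} -> {set T} -> R) : D1 \subset D ->
  (forall B1 B1' B2, B1 \subset D1 -> B1' \subset D1 -> B2 \subset D :\: D1 ->
     h (B1 :|: B2) = Phi B1 (B1' :|: B2)) ->
  bexpect q D h = bexpect q D1 (fun B1 => bexpect q D (Phi B1)).
Proof.
move=> sD1 hPhi.
have split_D g : bexpect q D g =
    bexpect q D1 (fun B1 => bexpect q (D :\: D1) (fun B2 => g (B1 :|: B2))).
  rewrite -bexpect_setU => [|x xD1]; last by rewrite inE xD1.
  by rewrite -{1}(setID D D1) (setIidPr sD1).
rewrite split_D; apply: eq_bexpect => B1 sB1; rewrite split_D.
rewrite -(bexpect_cst q D1 (bexpect q (D :\: D1) (fun B2 => h (B1 :|: B2)))).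
by apply: eq_bexpect => B1' sB1'; apply: eq_bexpect => B2 sB2; rewrite (hPhi B1 B1').
Qed.

Lemma bexpect_if_set0 q D a b :
  bexpect q D (fun B => if B == set0 then a else b) =
  (\prod_(x in D) (1 - q x)) * a + (1 - \prod_(x in D) (1 - q x)) * b.
Proof.
elim/setU1_ind: D => [|x D xD IH]; first by rewrite bexpect_set0 eqxx big_set0; ring.
rewrite bexpect_setU1 // IH big_setU1 //=.
rewrite (@eq_bexpect q D _ (fun _ => b)) ?bexpect_cst; first ring.
by move=> B _; rewrite -subset0 subUset sub1set inE.
Qed.

Section Probability.
Variables (q : T -> R) (D : {set T}).
Hypothesis q01 : {in D, forall x, 0 <= q x <= 1}.

Lemma bweight_ge0 B : 0 <= bweight q D B.
Proof.
apply: prodr_ge0 => x xD; case/andP: (q01 xD) => q0 q1.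
by case: (x \in B); rewrite ?subr_ge0.
Qed.

Lemma ler_bexpect h1 h2 : (forall B, B \subset D -> h1 B <= h2 B) ->
  bexpect q D h1 <= bexpect q D h2.
Proof. by move=> le_h; apply: ler_sum => B sB; rewrite ler_wpM2l ?bweight_ge0 ?le_h. Qed.

Lemma norm_bexpect_le h : `|bexpect q D h| <= bexpect q D (fun B => `|h B|).
Proof.
apply: le_trans (ler_norm_sum _ _ _) _; apply: ler_sum => B _.
by rewrite normrM ger0_norm ?bweight_ge0.
Qed.

Lemma bexpect01 h : (forall B, B \subset D -> 0 <= h B <= 1) -> 0 <= bexpect q D h <= 1.
Proof.
move=> h01; apply/andP; split.
  by rewrite -(bexpect_cst q D 0); apply: ler_bexpect => B /h01 /andP[].
by rewrite -(bexpect_cst q D 1); apply: ler_bexpect => B /h01 /andP[].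
Qed.

Lemma prod_subr01 (A : {set T}) : A \subset D -> 0 <= \prod_(x in A) (1 - q x) <= 1.
Proof.
move=> sA; have q01A x : x \in A -> 0 <= q x <= 1 by move/(subsetP sA)/q01.
apply/andP; split.
  by apply: prodr_ge0 => x /q01A /andP[_ q1]; rewrite subr_ge0.
apply: prodr_ile1 => x /q01A /andP[q0 q1].
by rewrite subr_ge0 q1 lerBlDr lerDl.
Qed.

End Probability.
End BernoulliProduct.

Lemma mixture_dist (R : realDomainType) (Q1 Q2 a0 a1 b0 b1 s : R) :
  0 <= Q2 <= 1 -> `|a0 - b0| <= s -> `|a1 - b1| <= s ->
  `|(Q1 * a0 + (1 - Q1) * a1) - (Q2 * b0 + (1 - Q2) * b1)| <=
  `|Q1 - Q2| * `|a0 - a1| + s.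
Proof.
move=> /andP[Q2_ge0 Q2_le1] d0 d1.
have -> : Q1 * a0 + (1 - Q1) * a1 - (Q2 * b0 + (1 - Q2) * b1) =
    (Q1 - Q2) * (a0 - a1) + (Q2 * (a0 - b0) + (1 - Q2) * (a1 - b1)) by ring.
rewrite -normrM; apply: le_trans (ler_normD _ _) _; rewrite lerD2l.
apply: le_trans (ler_normD _ _) _.
have Q2c_ge0 : 0 <= 1 - Q2 by rewrite subr_ge0.
rewrite !normrM (ger0_norm Q2_ge0) (ger0_norm Q2c_ge0).
have := ler_wpM2l Q2_ge0 d0; have := ler_wpM2l Q2c_ge0 d1; lra.
Qed.

Section ImageLaw.
Variables (R : realDomainType) (T T' : finType) (pi : T -> T') (q1 q2 : T -> R).
Variables (D0 : {set T}) (R' : {set T'}).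
Hypotheses (q1_01 : {in D0, forall x, 0 <= q1 x <= 1})
           (q2_01 : {in D0, forall x, 0 <= q2 x <= 1}).
Implicit Types (q : T -> R) (g : {set T'} -> R).

Definition fiber (y : T') := [set x in D0 | pi x == y].
Definition over (Y : {set T'}) := [set x in D0 | pi x \in Y].

Definition fiber_gap (y : T') : R :=
  `|\prod_(x in fiber y) (1 - q1 x) - \prod_(x in fiber y) (1 - q2 x)|.

Definition flip_invariant (g : {set T'} -> R) :=
  forall y B, y \in pi @: D0 -> y \notin R' -> g (y |: B) = g (B :\ y).

Lemma flip_invariant_setU1 g y : flip_invariant g -> flip_invariant (fun B => g (y |: B)).
Proof.
move=> gI y' B y'D y'R /=; have [<-|y'y] := eqVneq y' y.
  by congr g; apply/setP => z; rewrite !inE; case: eqP.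
rewrite setUCA gI //; congr g; apply/setP => z; rewrite !inE.
by case: (z =P y') => // ->; rewrite (negbTE y'y).
Qed.

Lemma bexpect_imset_fiber q g y (Y : {set T'}) : y \notin Y ->
  bexpect q (over (y |: Y)) (fun B => g (pi @: B)) =
  (\prod_(x in fiber y) (1 - q x)) * bexpect q (over Y) (fun B => g (pi @: B))
  + (1 - \prod_(x in fiber y) (1 - q x)) * bexpect q (over Y) (fun B => g (y |: pi @: B)).
Proof.
move=> yY.
have -> : over (y |: Y) = fiber y :|: over Y.
  by apply/setP => x; rewrite !inE andb_orr.
rewrite bexpect_setU => [|x]; last first.
  by rewrite !inE => /andP[_ /eqP ->]; rewrite (negbTE yY) andbF.
rewrite -bexpect_if_set0; apply: eq_bexpect => B1 sB1.
have [->|/set0Pn [x xB1]] := eqVneq B1 set0.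
  by apply: eq_bexpect => B2 _; rewrite set0U.
apply: eq_bexpect => B2 _; rewrite imsetU; congr (g (_ :|: _)); apply/setP => z.
have fib x' : x' \in B1 -> pi x' = y by move/(subsetP sB1); rewrite inE => /andP[_ /eqP].
rewrite inE; apply/imsetP/eqP => [[x' /fib -> ->] //|->]; by exists x; rewrite ?(fib x).
Qed.

Lemma over_sub Y : over Y \subset D0.
Proof. by apply/subsetP => x; rewrite inE => /andP[]. Qed.

Lemma fiber_sub y : fiber y \subset D0.
Proof. by apply/subsetP => x; rewrite inE => /andP[]. Qed.

Lemma bexpect_over01 q Y g : {in D0, forall x, 0 <= q x <= 1} ->
  (forall B, 0 <= g B <= 1) -> 0 <= bexpect q (over Y) (fun B => g (pi @: B)) <= 1.
Proof.
move=> q01 g01; apply: bexpect01 => [x /(subsetP (over_sub Y))|B _]; last exact: g01.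
exact: q01.
Qed.

(* Switch from [q1] to [q2] one fiber at a time; by [flip_invariant], the fiber
   over a node outside [R'] costs nothing. *)
Lemma dist_bexpect_over (Y : {set T'}) g :
  (forall B, 0 <= g B <= 1) -> flip_invariant g -> Y \subset pi @: D0 ->
  `|bexpect q1 (over Y) (fun B => g (pi @: B)) - bexpect q2 (over Y) (fun B => g (pi @: B))|
  <= \sum_(y in Y :&: R') fiber_gap y.
Proof.
elim/setU1_ind: Y g => [|y Y yY IH] g g01 gI.
  have -> : over set0 = set0 by apply/setP => x; rewrite !inE andbF.
  rewrite !bexpect_set0 subrr normr0 => _.
  by apply: sumr_ge0 => y _; exact: normr_ge0.
rewrite subUset sub1set => /andP[yD sY].
rewrite !bexpect_imset_fiber //.
have IH0 := IH g g01 gI sY.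
have IH1 := IH _ (fun B => g01 (y |: B)) (flip_invariant_setU1 y gI) sY.
apply: le_trans (mixture_dist _ (prod_subr01 q2_01 (fiber_sub y)) IH0 IH1) _.
have [yR|yR] := boolP (y \in R').
  have -> : (y |: Y) :&: R' = y |: (Y :&: R').
    by apply/setP => z; rewrite !inE; case: (z =P y) => [->|].
  rewrite big_setU1 /=; last by rewrite inE (negbTE yY).
  rewrite lerD2r -[X in _ <= X]mulr1 ler_wpM2l //.
  have /andP[a0_ge0 a0_le1] := bexpect_over01 Y q1_01 g01.
  have /andP[a1_ge0 a1_le1] := bexpect_over01 Y q1_01 (fun B => g01 (y |: B)).
  rewrite ler_norml; apply/andP; split; lra.
have -> : (y |: Y) :&: R' = Y :&: R'.
  by apply/setP => z; rewrite !inE; case: (z =P y) => [->|]; rewrite ?(negbTE yR) ?andbF.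
have yB (B : {set T}) : B \subset over Y -> y \notin pi @: B.
  move=> sB; apply/imsetP => -[x /(subsetP sB)]; rewrite inE => /andP[_ xY] yx.
  by rewrite yx xY in yY.
suff -> : bexpect q1 (over Y) (fun B => g (y |: pi @: B)) =
          bexpect q1 (over Y) (fun B => g (pi @: B)).
  by rewrite subrr normr0 mulr0 add0r.
apply: eq_bexpect => B sB; rewrite gI //; congr g; apply/setP => z; rewrite !inE.
by case: (z =P y) => // ->; rewrite (negbTE (yB B sB)).
Qed.

Lemma dist_bexpect_imset g : (forall B, 0 <= g B <= 1) -> flip_invariant g ->
  `|bexpect q1 D0 (fun B => g (pi @: B)) - bexpect q2 D0 (fun B => g (pi @: B))|
  <= \sum_(y in pi @: D0 :&: R') fiber_gap y.
Proof.
move=> g01 gI; have := dist_bexpect_over g01 gI (subxx _).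
suff -> : over (pi @: D0) = D0 by [].
by apply/setP => x; rewrite inE; case: (boolP (x \in D0)) => // /(imset_f pi) ->.
Qed.
End ImageLaw.

Section Cascade.
Variables (V : finType) (E : rel V) (S : {set V}).
Implicit Types (P C K N Pa Ca Pb Cb : {set V}) (w : {set V * V}) (pr : {set V} * {set V}).

Definition ic_next w pr := (pr.2, ic_step E w pr.1 pr.2).
Definition run w pr k := iter k (ic_next w) pr.

Lemma runS w pr k : run w pr k.+1 = run w (ic_next w pr) k.
Proof. exact: iterSr. Qed.

Lemma cascade_pairE w S0 t : cascade_pair E w S0 t = run w (set0, S0) t.
Proof. by elim: t => //= t ->. Qed.

Lemma subset_ic_step w P C : C \subset ic_step E w P C.
Proof. exact: subsetUl. Qed.

Lemma subset_run w pr k : pr.2 \subset (run w pr k).2.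
Proof. by elim: k => //= k IH; apply: subset_trans IH (subset_ic_step _ _ _). Qed.

Lemma eq_ic_step w w' P C :
  (forall a b, a \in C :\: P -> ((a, b) \in w) = ((a, b) \in w')) ->
  ic_step E w P C = ic_step E w' P C.
Proof.
move=> eqw; rewrite /ic_step; congr (_ :|: _); apply/setP=> z; rewrite !inE.
congr (_ && _); apply: eq_existsb => a.
by case aCP: (a \in C :\: P); rewrite //= eqw.
Qed.

Lemma eq_run w w' P C k : P \subset C ->
  (forall a b, a \notin P -> ((a, b) \in w) = ((a, b) \in w')) ->
  run w (P, C) k = run w' (P, C) k.
Proof.
elim: k P C => [|k IH] P C sPC eqw //.
rewrite !runS /ic_next /= (@eq_ic_step w w'); last first.
  by move=> a b; rewrite inE => /andP[aP _]; apply: eqw.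
apply: IH; first exact: subset_ic_step.
by move=> a b aC; apply: eqw; apply: contra aC; apply: (subsetP sPC).
Qed.

Section AgreeOff.
Variables (w : {set V * V}) (K N : {set V}).
Hypothesis K_closed : forall x z, x \in K -> E x z -> z \notin N -> z \in K.

Lemma ic_step_agree_off Pa Ca Pb Cb : N \subset Ca ->
  Pa :\: K = Pb :\: K -> Ca :\: K = Cb :\: K ->
  ic_step E w Pa Ca :\: K \subset ic_step E w Pb Cb :\: K.
Proof.
move=> sN eP eC.
have hC t : t \notin K -> (t \in Ca) = (t \in Cb).
  by move=> tK; move/setP: eC => /(_ t); rewrite !inE tK.
have hP t : t \notin K -> (t \in Pa) = (t \in Pb).
  by move=> tK; move/setP: eP => /(_ t); rewrite !inE tK.
apply/subsetP=> z; rewrite /ic_step !inE.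
case/andP=> zK /orP[zCa|/andP[zCa /existsP[x /and3P[xn Exz xzw]]]].
  by rewrite zK -hC // zCa.
rewrite zK /=; apply/orP; right; rewrite -hC // zCa /=.
have xK : x \notin K.
  apply/negP=> xK; have zN : z \notin N by apply: contra zCa; apply: (subsetP sN).
  by rewrite (K_closed xK Exz zN) in zK.
apply/existsP; exists x; rewrite Exz xzw !andbT.
by move: xn; rewrite !inE -hC // -hP.
Qed.

Lemma run_agree_off k Pa Ca Pb Cb : N \subset Ca -> N \subset Cb ->
  Pa :\: K = Pb :\: K -> Ca :\: K = Cb :\: K ->
  (run w (Pa, Ca) k).2 :\: K = (run w (Pb, Cb) k).2 :\: K.
Proof.
elim: k Pa Ca Pb Cb => [|k IH] Pa Ca Pb Cb sa sb eP eC //.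
rewrite !runS /ic_next /=; apply: IH => //.
- exact: subset_trans sa (subset_ic_step _ _ _).
- exact: subset_trans sb (subset_ic_step _ _ _).
- by apply/eqP; rewrite eqEsubset !ic_step_agree_off.
Qed.

End AgreeOff.

Definition rooted C := S \subset C /\ forall c, c \in C ->
  exists s q, [/\ s \in S, path E s q, uniq (s :: q), last s q = c & {subset s :: q <= C}].

Lemma rooted_seed : rooted S.
Proof. by split=> // c cS; exists c, [::]; split=> // t; rewrite inE => /eqP ->. Qed.

Lemma rooted_ic_step w P C : rooted C -> rooted (ic_step E w P C).
Proof.
have sC := subset_ic_step w P C.
case=> sS rootC; split=> [|c]; first exact: subset_trans sS sC.
rewrite /ic_step inE => /orP[cC|].
  have [s [q [sS' pq uq lq aq]]] := rootC c cC.
  by exists s, q; split=> // t /aq /(subsetP sC).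
rewrite inE => /andP[cC /existsP[x /and3P[xn Exc xcw]]].
have [s [q [sS' pq uq lq aq]]] : exists s q,
    [/\ s \in S, path E s q, uniq (s :: q), last s q = x & {subset s :: q <= C}].
  by apply: rootC; move: xn; rewrite inE => /andP[].
exists s, (rcons q c); split=> //.
- by rewrite rcons_path pq lq.
- by rewrite -rcons_cons rcons_uniq uq andbT; apply: contra cC; apply: aq.
- by rewrite last_rcons.
move=> t; rewrite -rcons_cons mem_rcons inE => /orP[/eqP ->|/aq /(subsetP sC) //].
rewrite /ic_step inE; apply/orP; right; rewrite inE (negbTE cC).
by apply/existsP; exists x; rewrite xn Exc.
Qed.

Lemma path_avoid N x p :
  path (fun a b => E a b && (b \notin N)) x p -> path E x p && all [predC N] p.
Proof.
elim: p x => [|z p IH] x //= /andP[/andP[Exz zN] /IH /andP[-> ->]].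
by rewrite Exz zN.
Qed.

(* A seed path to [c], followed by [y] and a shortened path avoiding [N], is a
   simple path through [y]. *)
Lemma irrelevant_unreachable C N y c v : rooted C -> C \subset N -> y \notin N ->
  c \in C -> E c y -> y \notin relset E S v ->
  ~~ connect (fun a b => E a b && (b \notin N)) y v.
Proof.
move=> [sS rootC] sCN yN cC Ecy; apply: contraNN => /connectP [p pth vl].
rewrite vl; case/shortenP: pth => p' /path_avoid /andP[pE aN] uq' _.
have [s [qs [sS0 pqs uqs lqs aqs]]] := rootC c cC.
rewrite inE; apply/asboolP; split.
  by apply: contra yN => /(subsetP sS) /(subsetP sCN).
exists s, (qs ++ y :: p'); split => //.
- by rewrite cat_path pqs lqs /= Ecy pE.
- rewrite -cat_cons cat_uniq uqs uq' andbT andTb; apply/hasPn => t tin.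
  have tN : t \notin N.
    by move: tin; rewrite inE => /orP[/eqP ->|tp] //; exact: (allP aN).
  by apply: contra tN => /aqs /(subsetP sCN).
- by rewrite last_cat lqs.
- by rewrite inE mem_cat inE eqxx !orbT.
Qed.

(* The two cascades can only differ at the nodes [K] reachable from [y] without
   entering an active node, and [v] is not among them. *)
Lemma run_flip_irrelevant w k C (B : {set V}) y c v :
  rooted C -> c \in C -> E c y -> y \notin C -> y \notin relset E S v ->
  (v \in (run w (C, C :|: (y |: B)) k).2) = (v \in (run w (C, C :|: (B :\ y)) k).2).
Proof.
move=> rC cC Ecy yC yR.
set N := (C :|: B) :\ y.
set K := [set z | connect (fun a b => E a b && (b \notin N)) y z].
have K_closed x z : x \in K -> E x z -> z \notin N -> z \in K.
  move=> xK Exz zN; rewrite inE; move: xK; rewrite inE => xK.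
  apply: connect_trans xK (connect1 _).
  by rewrite /= Exz zN.
have yK : y \in K by rewrite inE connect0.
have sCN : C \subset N.
  by apply/subsetP => t tC; rewrite !inE tC andbT; apply: contraNneq yC => <-.
have yN : y \notin N by rewrite !inE eqxx.
have vK : v \notin K by rewrite inE; exact: (irrelevant_unreachable rC sCN yN cC Ecy yR).
have sa : N \subset C :|: (y |: B).
  by apply/subsetP => t; rewrite !inE => /andP[_ /orP[->|->]]; rewrite ?orbT.
have sb : N \subset C :|: (B :\ y).
  by apply/subsetP => t; rewrite !inE => /andP[ty /orP[->|->]]; rewrite ?ty ?orbT.
have eC : (C :|: (y |: B)) :\: K = (C :|: (B :\ y)) :\: K.
  apply/setP=> t; rewrite !in_setD !in_setU in_set1 in_setD1.
  by case: (t =P y) => [->|] //=; rewrite yK.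
have := @run_agree_off w K N K_closed k C (C :|: (y |: B)) C (C :|: (B :\ y))
  sa sb (erefl _) eC.
by move/setP/(_ v); rewrite !in_setD (negbTE vK).
Qed.

End Cascade.

Lemma dist_expRN (R : realType) (a b : R) :
  0 <= a -> 0 <= b -> `|expR (- a) - expR (- b)| <= `|a - b|.
Proof.
wlog ab : a b / a <= b.
  move=> H a0 b0; case: (leP a b) => [ab|/ltW ba]; first exact: H.
  by rewrite distrC [X in _ <= X]distrC; apply: H.
move=> a0 b0.
have -> : expR (- b) = expR (- a) * expR (a - b) by rewrite -expRD; congr expR; ring.
have ea_le1 : expR (- a) <= 1 by rewrite expR_le1 oppr_le0.
have eab_le1 : expR (a - b) <= 1 by rewrite expR_le1 subr_le0.
have := expR_ge1Dx (a - b); have := expR_gt0 (- a) => ea_gt0 eab_ge.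
rewrite ger0_norm; last by rewrite subr_ge0 ler_piMr // ltW.
by rewrite distrC ger0_norm ?subr_ge0 //; nra.
Qed.

Section EdgeTrials.
Variables (R : realType) (V : finType) (E : rel V).
Implicit Types (p : V -> V -> R) (P C : {set V}) (w : {set V * V}).

Definition edge_prob p (e : V * V) := p e.1 e.2.

Definition frontier_edges P C := [set e | E e.1 e.2 && (e.1 \in C :\: P)].

Definition new_inneighbours (pr : {set V} * {set V}) u :=
  (pr.2 :\: pr.1) :&: [set x | E x u].

Lemma expectE p f : expect E p f = bexpect (edge_prob p) (edgeset E) f.
Proof. by []. Qed.

Lemma frontier_edges_sub P C : frontier_edges P C \subset edgeset E.
Proof. by apply/subsetP => e; rewrite !inE => /andP[]. Qed.

Lemma edge_prob01 p (D : {set V * V}) : (forall u v, E u v -> 0 <= p u v < 1) ->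
  D \subset edgeset E -> {in D, forall e, 0 <= edge_prob p e <= 1}.
Proof. by move=> p01 sD e /(subsetP sD); rewrite inE => /p01 /andP[-> /ltW]. Qed.

(* The first step reads only the trials in [frontier_edges P C], the later ones
   never read them. *)
Lemma run_succ_split P C k (B1 B1' B2 : {set V * V}) :
  B1 \subset frontier_edges P C -> B1' \subset frontier_edges P C ->
  B2 \subset edgeset E :\: frontier_edges P C ->
  run E (B1 :|: B2) (P, C) k.+1 = run E (B1' :|: B2) (C, ic_step E B1 P C) k.
Proof.
move=> s1 s1' s2; rewrite runS /ic_next /=.
rewrite (@eq_ic_step _ E (B1 :|: B2) B1); last first.
  move=> a b aCP; rewrite in_setU; have [/(subsetP s2)|] := boolP ((a, b) \in B2).
    by rewrite in_setD [_ \in frontier_edges _ _]inE /= aCP andbT inE => /andP[/negP nE /nE].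
  by rewrite orbF.
apply: eq_run => [|a b aC]; first exact: subset_ic_step.
have notin (B : {set V * V}) : B \subset frontier_edges P C -> ((a, b) \in B) = false.
  by move=> sB; apply: contraNF aC => /(subsetP sB); rewrite inE => /andP[_ /setDP[]].
by rewrite !in_setU (notin B1) ?(notin B1').
Qed.

Lemma ic_step_frontier P C (B1 : {set V * V}) :
  B1 \subset frontier_edges P C -> ic_step E B1 P C = C :|: snd @: B1.
Proof.
move=> sB; apply/setP => z; rewrite /ic_step !in_setU; have [//|zC /=] := boolP (z \in C).
rewrite inE zC /=; apply/existsP/imsetP => [[x /and3P[_ _ xz]]|[[x z'] xzB /= ->]].
  by exists (x, z).
exists x; rewrite xzB andbT.
by move: (subsetP sB _ xzB); rewrite inE /= => /andP[-> ->].
Qed.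

Lemma sum_fiber_frontier P C y (F : V -> V -> R) :
  \sum_(e in fiber snd (frontier_edges P C) y) F e.1 e.2 =
  \sum_(x | E x y) chi R (new_inneighbours (P, C) y) x * F x y.
Proof.
rewrite (eq_bigl (fun e => (e \in frontier_edges P C) && (e.2 == y))); last first.
  by move=> e; rewrite inE.
rewrite big_mkcond /= (partition_big fst xpredT) //= [RHS]big_mkcond /=.
apply: eq_bigr => x _; rewrite (bigD1 (x, y)) //= big1 ?addr0; last first.
  move=> [a b] /= /andP[/eqP -> ne]; case: ifP => // /andP[_ /eqP by_].
  by move: ne; rewrite by_ eqxx.
rewrite eqxx /chi /new_inneighbours !inE /= andbT.
by case: (E x y); case: (x \in C); case: (x \in P); rewrite /= ?mul1r ?mul0r.
Qed.

Lemma prod_fiber_frontier p P C y : (forall u v, E u v -> 0 <= p u v < 1) ->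
  \prod_(e in fiber snd (frontier_edges P C) y) (1 - edge_prob p e) =
  expR (- xdot E (new_inneighbours (P, C) y) (theta p) y).
Proof.
move=> p01; rewrite (eq_bigr (fun e => expR (ln (1 - p e.1 e.2)))); last first.
  move=> e; rewrite !inE => /andP[/andP[Ee _] _]; rewrite lnK // posrE subr_gt0.
  by case/andP: (p01 _ _ Ee).
rewrite -expR_sum (sum_fiber_frontier P C y (fun a b => ln (1 - p a b))) /xdot -sumrN.
by congr expR; apply: eq_bigr => x _; rewrite /theta mulrN opprK.
Qed.

Lemma xdot_theta_ge0 p A y : (forall u v, E u v -> 0 <= p u v < 1) ->
  0 <= xdot E A (theta p) y.
Proof.
move=> p01; apply: sumr_ge0 => x Exy; rewrite mulr_ge0 ?ler0n // oppr_ge0.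
by rewrite ln_le0 // lerBlDr lerDl; case/andP: (p01 _ _ Exy).
Qed.

Definition hit v k pr w : R := (v \in (run E w pr k).2)%:R.

Definition hit_prob p v k pr : R := bexpect (edge_prob p) (edgeset E) (hit v k pr).

Lemma hit_prob_succ p v k P C :
  hit_prob p v k.+1 (P, C) =
  bexpect (edge_prob p) (frontier_edges P C) (fun B1 => hit_prob p v k (C, ic_step E B1 P C)).
Proof.
rewrite /hit_prob; apply: bexpect_tower (frontier_edges_sub _ _) _ => B1 B1' B2 s1 s1' s2.
by rewrite /hit (run_succ_split _ s1 s1' s2).
Qed.

Lemma hit_prob01 p v k pr :
  (forall a b, E a b -> 0 <= p a b < 1) -> 0 <= hit_prob p v k pr <= 1.
Proof.
move=> p01; apply: bexpect01 => [|w _]; first exact: (edge_prob01 p01 (subxx _)).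
by rewrite /hit; case: (_ \in _); rewrite ?ler01 ?lexx.
Qed.

Lemma hit_prob_seed p (S : {set V}) u k : u \in S -> hit_prob p u k (set0, S) = 1.
Proof.
move=> uS; rewrite -[RHS](bexpect_cst (edge_prob p) (edgeset E)).
by apply: eq_bexpect => w _; rewrite /hit (subsetP (subset_run E w (set0, S) k) u uS).
Qed.

Lemma sigma_hit p (S : {set V}) : sigma E p S = \sum_v hit_prob p v #|V|.-1 (set0, S).
Proof.
rewrite /sigma /hit_prob expectE -bexpect_sum; apply: eq_bexpect => w _.
rewrite -sum1_card natr_sum big_mkcond /=; apply: eq_bigr => u _.
by rewrite /hit /cascade cascade_pairE; case: (u \in _).
Qed.

End EdgeTrials.

Section Sensitivity.
Variables (R : realType) (V : finType) (E : rel V) (S : {set V}) (pt ps : V -> V -> R).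
Hypotheses (pt01 : forall u v, E u v -> 0 <= pt u v < 1)
           (ps01 : forall u v, E u v -> 0 <= ps u v < 1).
Variable v : V.
Implicit Types (P C : {set V}) (pr : {set V} * {set V}) (w : {set V * V}).

Local Notation ED := (edgeset E).

Definition dtheta a b := theta pt a b - theta ps a b.

Definition step_cost pr : R :=
  \sum_(u in relset E S v) (u \notin pr.2)%:R * `|xdot E (new_inneighbours E pr u) dtheta u|.
Definition cost k pr w : R := \sum_(i < k) step_cost (run E w pr i).

Lemma fiber_gap_le_xdot P C y :
  fiber_gap snd (edge_prob pt) (edge_prob ps) (frontier_edges E P C) y <=
  `|xdot E (new_inneighbours E (P, C) y) dtheta y|.
Proof.
rewrite /fiber_gap !prod_fiber_frontier //.
have -> : xdot E (new_inneighbours E (P, C) y) dtheta y =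
    xdot E (new_inneighbours E (P, C) y) (theta pt) y -
    xdot E (new_inneighbours E (P, C) y) (theta ps) y.
  by rewrite /xdot -sumrB; apply: eq_bigr => x _; rewrite /dtheta mulrBr.
by apply: dist_expRN; apply: xdot_theta_ge0.
Qed.

Lemma bexpect_cost_succ p k P C :
  bexpect (edge_prob p) ED (cost k.+1 (P, C)) = step_cost (P, C) +
  bexpect (edge_prob p) (frontier_edges E P C)
    (fun B1 => bexpect (edge_prob p) ED (cost k (C, ic_step E B1 P C))).
Proof.
rewrite (@bexpect_tower _ _ _ ED (frontier_edges E P C) _
  (fun B1 w => step_cost (P, C) + cost k (C, ic_step E B1 P C) w)) ?frontier_edges_sub //.
  rewrite (@eq_bexpect _ _ _ _ _ (fun B1 => step_cost (P, C) +
      bexpect (edge_prob p) ED (cost k (C, ic_step E B1 P C)))) => [|B1 _].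
    by rewrite bexpectD bexpect_cst.
  by rewrite bexpectD bexpect_cst.
move=> B1 B1' B2 s1 s1' s2; rewrite /cost big_ord_recl; congr (_ + _).
by apply: eq_bigr => i _; rewrite -(run_succ_split _ s1 s1' s2).
Qed.

(* The next state is [C :|: snd @: B1]: a node is hit iff its fiber of frontier
   trials is nonempty, and hitting a node of [C] or a node irrelevant to [v]
   changes nothing. *)
Lemma first_step_dist k P C : rooted E S C ->
  `|bexpect (edge_prob pt) (frontier_edges E P C)
      (fun B1 => hit_prob E pt v k (C, ic_step E B1 P C)) -
    bexpect (edge_prob ps) (frontier_edges E P C)
      (fun B1 => hit_prob E pt v k (C, ic_step E B1 P C))|
  <= step_cost (P, C).
Proof.
move=> rC; pose g B := hit_prob E pt v k (C, C :|: B).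
rewrite !(@eq_bexpect _ _ _ (frontier_edges E P C) _ (fun B1 => g (snd @: B1))) => [|B1|B1];
  try by move=> sB1; rewrite /g ic_step_frontier.
have q01 (p : V -> V -> R) : (forall u v, E u v -> 0 <= p u v < 1) ->
    {in frontier_edges E P C, forall e, 0 <= edge_prob p e <= 1}.
  by move=> p01; apply: edge_prob01 p01 (frontier_edges_sub _ _ _).
apply: le_trans (@dist_bexpect_imset _ _ _ snd _ _ _ (relset E S v :\: C)
  (q01 _ pt01) (q01 _ ps01) g (fun B => hit_prob01 _ _ _ pt01) _) _.
  move=> _ B /imsetP [[c y] e_out ->] /= yR.
  move: e_out; rewrite inE /= => /andP[Ecy /setDP[cC _]].
  have [yC|yC] := boolP (y \in C).
    rewrite /g; congr (hit_prob _ _ _ _ (_, _)); apply/setP => t; rewrite !inE.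
    by case: (t =P y) => [->|_]; rewrite ?yC ?orbT.
  have yR' : y \notin relset E S v by move: yR; rewrite in_setD yC.
  by apply: eq_bexpect => w _; rewrite /hit (run_flip_irrelevant _ _ _ rC cC Ecy yC yR').
rewrite /step_cost /= big_mkcond [X in _ <= X]big_mkcond /=; apply: ler_sum => y _.
have [|_] := boolP (y \in snd @: frontier_edges E P C :&: (relset E S v :\: C)).
  by rewrite in_setI in_setD => /and3P[_ yC yR]; rewrite yR yC mul1r fiber_gap_le_xdot.
by case: ifP => // _; rewrite mulr_ge0.
Qed.

Lemma hit_prob_dist k P C : rooted E S C ->
  `|hit_prob E pt v k (P, C) - hit_prob E ps v k (P, C)|
  <= bexpect (edge_prob ps) ED (cost k (P, C)).
Proof.
elim: k P C => [|k IH] P C rC.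
  rewrite /hit_prob /hit /cost /= !bexpect_cst subrr normr0.
  by rewrite (@eq_bexpect _ _ _ _ _ (fun=> 0)) ?bexpect_cst // => w _; rewrite big_ord0.
have q01 := edge_prob01 ps01 (frontier_edges_sub E P C).
rewrite !hit_prob_succ bexpect_cost_succ.
rewrite -[X in `|X|](subrKA (bexpect (edge_prob ps) (frontier_edges E P C)
  (fun B1 => hit_prob E pt v k (C, ic_step E B1 P C)))) -bexpectB.
apply: le_trans (ler_normD _ _) _; apply: lerD; first exact: first_step_dist.
apply: le_trans (norm_bexpect_le q01 _) _; apply: ler_bexpect => // B1 _.
exact/IH/rooted_ic_step.
Qed.

End Sensitivity.

Section DataPairs.
Variables (R : realType) (V : finType) (E : rel V) (S : {set V}).

Lemma sum_step_costs_data_pairs (th : V -> V -> R) w u : u \notin S ->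
  \sum_(i < #|V|.-1) (u \notin (run E w (set0, S) i).2)%:R *
    `|xdot E (new_inneighbours E (run E w (set0, S) i) u) th u|
  = \sum_(xy <- data_pairs E w S u) `|xdot E xy.1 th u|.
Proof.
move=> uS; rewrite /data_pairs (negbTE uS) big_map big_filter.
rewrite (_ : iota 0 #|V|.-1 = index_iota 0 #|V|.-1); last by rewrite /index_iota subn0.
rewrite big_mkord [RHS]big_mkcond /=; apply: eq_bigr => t _.
rewrite /Aset /newly /cascade /new_inneighbours cascade_pairE.
case: (u \in _) => /=; first by rewrite mul0r.
rewrite mul1r; case: (boolP (_ == set0)) => [/eqP ->|] //=.
by rewrite /xdot big1 ?normr0 // => x _; rewrite /chi inE mul0r.
Qed.

Lemma expect_cost_data_pairs (pt ps : V -> V -> R) v :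
  bexpect (edge_prob ps) (edgeset E) (cost E S pt ps v #|V|.-1 (set0, S)) =
  \sum_(u in relset E S v) expect E ps (fun w =>
    \sum_(xy <- data_pairs E w S u) `|xdot E xy.1 (dtheta pt ps) u|).
Proof.
rewrite /cost /step_cost -bexpect_sum; apply: eq_bexpect => w _.
rewrite exchange_big; apply: eq_bigr => u uR.
by rewrite sum_step_costs_data_pairs //; move: uR; rewrite inE => /asboolP [].
Qed.

End DataPairs.

Theorem lemma1 (R : realType) (V : finType) (E : rel V) (S : {set V})
    (pt ps : V -> V -> R)
    (hpt : forall u v, E u v -> 0 <= pt u v < 1)
    (hps : forall u v, E u v -> 0 <= ps u v < 1) :
  `| sigma E pt S - sigma E ps S |
  <= \sum_(v in ~: S) \sum_(u in relset E S v)
       expect E ps (fun w =>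
         \sum_(xy <- data_pairs E w S u)
           `| xdot E xy.1 (fun a b => theta pt a b - theta ps a b) u |).
Proof.
rewrite !sigma_hit -sumrB (bigID (mem S)) /= big1 => [|v vS]; last first.
  by rewrite !hit_prob_seed ?subrr.
rewrite add0r; apply: le_trans (ler_norm_sum _ _ _) _.
rewrite [X in _ <= X](eq_bigl (fun v => v \notin S)) => [|v]; last by rewrite inE.
apply: ler_sum => v _; rewrite -expect_cost_data_pairs.
exact: hit_prob_dist hpt hps v #|V|.-1 set0 S (rooted_seed E S).
Qed.
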